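(* In the standing setting, let $(A,B,R,\sigma)$ be a normalized context. If $(\chi_X,\chi_Y)\in\mathcal{FC}$ with $\varnothing\ne X\subsetneq B$ and $\varnothing\ne Y\subsetneq A$, then $(\chi_{B\setminus X},\chi_{A\setminus Y})\in\mathcal{FC}$.
   Context: Adjoint triple: for posets $(P_1,\le_1),(P_2,\le_2),(P_3,\le_3)$, maps $\&\colon P_1\times P_2\to P_3$, $\swarrow\colon P_3\times P_2\to P_1$, $\nwarrow\colon P_3\times P_1\to P_2$ with $x\le_1 z\swarrow y \iff x\,\&\,y\le_3 z \iff y\le_2 z\nwarrow x$ for all $x,y,z$. For lower-bounded posets, $\&$ has zero-divisors if there are $x\ne\bot_1$, $y\neq\bot_2$ with $x\,\&\,y=\bot_3$. Standing setting: $(L_1,\preceq_1,\bot_1,\top_1)$ and $(L_2,\preceq_2,\bot_2,\top_2)$ are complete lattices and $(P,\le,\bot,\top)$ is a bounded poset. A multi-adjoint frame consists of adjoint triples $(\&_i,\swarrow^i,\nwarrow_i)$, $i=1,\dots,n$, with respect to $L_1,L_2,P$; a property-oriented frame consists of adjoint triples $(\&^p_j,\swarrow_p^j,\nwarrow^p_j)$, $j=1,\dots,m$, with respect to $P,L_2,L_1$; an object-oriented frame consists of adjoint triples $(\&^o_k,\swarrow_o^k,\nwarrow^o_k)$, $k=1,\dots,s$, with respect to $L_1,P,L_2$. All conjunctors $\&_i,\&^p_j,\&^o_k$ have no zero-divisors. A context $(A,B,R,\sigma)$ consists of non-empty sets $A,B$, $R\colon A\times B\to P$, and maps $\sigma,\sigma_p,\sigma_o$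 from $A\times B$ to the index sets of the three frames. It is normalized if every $a\in A$ has $b_1,b_2\in B$ with $R(a,b_1)\ne\bot$, $R(a,b_2)=\bot$, and every $b\in B$ has $a_1,a_2\in A$ with $R(a_1,b)\neq\bot$, $R(a_2,b)=\bot$. Fuzzy necessity operators: $g^{\uparrow_N}(a)=\inf\{g(b)\swarrow_o^{\sigma_o(a,b)}R(a,b)\mid b\in B\}$ for $g\in L_2^B$, and $f^{\downarrow^N}(b)=\inf\{f(a)\nwarrow^p_{\sigma_p(a,b)}R(a,b)\mid a\in A\}$ for $f\in L_1^A$. $\mathcal F_N=\{(g,f)\mid g\in L_2^B,\ f\in L_1^A,\ g^{\uparrow_N}=f,\ f^{\downarrow^N}=g\}$. For $X\subseteq B$, $\chi_X\in L_2^B$ takes value $\top_2$ on $X$ and $\bot_2$ elsewhere; for $Y\subseteq A$, $\chi_Y\in L_1^A$ takes value $\top_1$ on $Y$ and $\bot_1$ elsewhere. $\mathcal{FC}=\{(\chi_X,\chi_Y)\in\mathcal F_N\mid \varnothing\ne X\subsetneq B,\ \varnothing\neq Y\subsetneq A\}$. *)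

From mathcomp Require Import all_boot.
Set Implicit Arguments.
Unset Strict Implicit.
Unset Printing Implicit Defensive.

Record CLattice := {
  cl_car :> Type;
  cl_le : cl_car -> cl_car -> Prop;
  cl_refl : forall x, cl_le x x;
  cl_antisym : forall x y, cl_le x y -> cl_le y x -> x = y;
  cl_trans : forall x y z, cl_le x y -> cl_le y z -> cl_le x z;
  cl_inf : (cl_car -> Prop) -> cl_car;
  cl_inf_lb : forall (S : cl_car -> Prop) x, S x -> cl_le (cl_inf S) x;
  cl_inf_glb : forall (S : cl_car -> Prop) y,
      (forall x, S x -> cl_le y x) -> cl_le y (cl_inf S)
}.

Definition cl_bot (L : CLattice) : L := cl_inf (fun _ => True).
Definition cl_top (L : CLattice) : L := cl_inf (fun _ => False).

Record BPoset := {
  bp_car :> Type;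
  bp_le : bp_car -> bp_car -> Prop;
  bp_refl : forall x, bp_le x x;
  bp_antisym : forall x y, bp_le x y -> bp_le y x -> x = y;
  bp_trans : forall x y z, bp_le x y -> bp_le y z -> bp_le x z;
  bp_bot : bp_car;
  bp_top : bp_car;
  bp_bot_le : forall x, bp_le bp_bot x;
  bp_le_top : forall x, bp_le x bp_top
}.

Definition adjoint_triple {T1 T2 T3 : Type}
  (le1 : T1 -> T1 -> Prop) (le2 : T2 -> T2 -> Prop) (le3 : T3 -> T3 -> Prop)
  (conj : T1 -> T2 -> T3) (sw : T3 -> T2 -> T1) (nw : T3 -> T1 -> T2) : Prop :=
  forall x y z, (le1 x (sw z y) <-> le3 (conj x y) z) /\
                (le3 (conj x y) z <-> le2 y (nw z x)).

Definition no_zero_divisors {T1 T2 T3 : Type} (b1 : T1) (b2 : T2) (b3 : T3)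
  (conj : T1 -> T2 -> T3) : Prop :=
  ~ (exists x y, x <> b1 /\ y <> b2 /\ conj x y = b3).

Record Setting := {
  L1 : CLattice;
  L2 : CLattice;
  P : BPoset;
  nn : nat;
  ma_conj : 'I_nn -> L1 -> L2 -> P;
  ma_sw : 'I_nn -> P -> L2 -> L1;
  ma_nw : 'I_nn -> P -> L1 -> L2;
  ma_adj : forall i, adjoint_triple (@cl_le L1) (@cl_le L2) (@bp_le P)
                       (ma_conj i) (ma_sw i) (ma_nw i);
  ma_nzd : forall i, no_zero_divisors (cl_bot L1) (cl_bot L2) (bp_bot P) (ma_conj i);
  mm : nat;
  p_conj : 'I_mm -> P -> L2 -> L1;
  p_sw : 'I_mm -> L1 -> L2 -> P;
  p_nw : 'I_mm -> L1 -> P -> L2;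
  p_adj : forall j, adjoint_triple (@bp_le P) (@cl_le L2) (@cl_le L1)
                      (p_conj j) (p_sw j) (p_nw j);
  p_nzd : forall j, no_zero_divisors (bp_bot P) (cl_bot L2) (cl_bot L1) (p_conj j);
  ss : nat;
  o_conj : 'I_ss -> L1 -> P -> L2;
  o_sw : 'I_ss -> L2 -> P -> L1;
  o_nw : 'I_ss -> L2 -> L1 -> P;
  o_adj : forall k, adjoint_triple (@cl_le L1) (@bp_le P) (@cl_le L2)
                      (o_conj k) (o_sw k) (o_nw k);
  o_nzd : forall k, no_zero_divisors (cl_bot L1) (bp_bot P) (cl_bot L2) (o_conj k)
}.

Record Context (S : Setting) := {
  cA : Type;
  cB : Type;
  cA_ne : inhabited cA;
  cB_ne : inhabited cB;
  cR : cA -> cB -> P S;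
  csigma : cA -> cB -> 'I_(nn S);
  csigma_p : cA -> cB -> 'I_(mm S);
  csigma_o : cA -> cB -> 'I_(ss S)
}.

Definition normalized (S : Setting) (K : Context S) : Prop :=
  (forall a : cA K, (exists b1, cR a b1 <> bp_bot (P S)) /\
                    (exists b2, cR a b2 = bp_bot (P S))) /\
  (forall b : cB K, (exists a1, cR a1 b <> bp_bot (P S)) /\
                    (exists a2, cR a2 b = bp_bot (P S))).

Definition up_N (S : Setting) (K : Context S) (g : cB K -> L2 S) : cA K -> L1 S :=
  fun a => cl_inf (fun x => exists b, x = o_sw (csigma_o a b) (g b) (cR a b)).

Definition down_N (S : Setting) (K : Context S) (f : cA K -> L1 S) : cB K -> L2 S :=
  fun b => cl_inf (fun y => exists a, y = p_nw (csigma_p a b) (f a) (cR a b)).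

Definition in_FN (S : Setting) (K : Context S)
  (g : cB K -> L2 S) (f : cA K -> L1 S) : Prop :=
  up_N g = f /\ down_N f = g.

Definition chiB (S : Setting) (K : Context S) (X : pred (cB K)) : cB K -> L2 S :=
  fun b => if X b then cl_top (L2 S) else cl_bot (L2 S).
Definition chiA (S : Setting) (K : Context S) (Y : pred (cA K)) : cA K -> L1 S :=
  fun a => if Y a then cl_top (L1 S) else cl_bot (L1 S).

Definition nonempty_proper {T : Type} (X : pred T) : Prop :=
  (exists t, X t) /\ (exists t, ~~ X t).

Definition in_FC (S : Setting) (K : Context S) (X : pred (cB K)) (Y : pred (cA K)) : Prop :=
  in_FN (chiB X) (chiA Y) /\ nonempty_proper X /\ nonempty_proper Y.

(* Over a normalized context, a crisp pair (chi_X, chi_Y) is a concept exactly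
   when X and Y are unions of the same blocks of R: R a b <> bot forces
   (b \in X) = (a \in Y).  Indeed a single b outside X with R a b <> bot makes
   the necessity operator drop to bot at a, since the conjunctors have no
   zero-divisors, and normalization supplies such a b for every a (and dually).
   The block condition is invariant under complementing both X and Y.  When
   the lattices are one-point, every pair is a concept. *)

From Stdlib Require Import Classical FunctionalExtensionality.
From mathcomp Require Import all_boot.
Set Implicit Arguments.
Unset Strict Implicit.

Lemma cl_bot_le (L : CLattice) (x : L) : cl_le (cl_bot L) x.
Proof. exact: cl_inf_lb. Qed.

Lemma cl_le_top (L : CLattice) (x : L) : cl_le x (cl_top L).
Proof. by apply: cl_inf_glb => ? []. Qed.

Lemma cl_le_bot_eq (L : CLattice) (x : L) : cl_le x (cl_bot L) -> x = cl_bot L.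
Proof. by move=> le_x_bot; apply: cl_antisym => //; apply: cl_bot_le. Qed.

Lemma cl_top_eq (L : CLattice) (x : L) : cl_le (cl_top L) x -> x = cl_top L.
Proof. by move=> le_top_x; apply: cl_antisym => //; apply: cl_le_top. Qed.

Lemma cl_trivial (L : CLattice) : cl_top L = cl_bot L -> forall x y : L, x = y.
Proof.
move=> top_bot.
suff all_bot (x : L) : x = cl_bot L by move=> x y; rewrite (all_bot x) (all_bot y).
by apply: cl_le_bot_eq; rewrite -top_bot; apply: cl_le_top.
Qed.

Lemma cl_inf_top (L : CLattice) (A : L -> Prop) :
  (forall x, A x -> x = cl_top L) -> cl_inf A = cl_top L.
Proof. by move=> A_top; apply: cl_top_eq; apply: cl_inf_glb => x /A_top ->; apply: cl_refl. Qed.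

Lemma cl_inf_bot (L : CLattice) (A : L -> Prop) : A (cl_bot L) -> cl_inf A = cl_bot L.
Proof. by move=> A_bot; apply: cl_le_bot_eq; apply: cl_inf_lb. Qed.

Lemma adjoint_triple_swap (T1 T2 T3 : Type) (le1 : T1 -> T1 -> Prop)
    (le2 : T2 -> T2 -> Prop) (le3 : T3 -> T3 -> Prop)
    (conj : T1 -> T2 -> T3) (sw : T3 -> T2 -> T1) (nw : T3 -> T1 -> T2) :
  adjoint_triple le1 le2 le3 conj sw nw ->
  adjoint_triple le2 le1 le3 (fun y x => conj x y) nw sw.
Proof. by move=> adj y x z; have [? ?] := adj x y z; split; apply: iff_sym. Qed.

Lemma no_zero_divisors_swap (T1 T2 T3 : Type) (b1 : T1) (b2 : T2) (b3 : T3)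
    (conj : T1 -> T2 -> T3) :
  no_zero_divisors b1 b2 b3 conj -> no_zero_divisors b2 b1 b3 (fun y x => conj x y).
Proof. by move=> nzd [y [x [? [? ?]]]]; apply: nzd; exists x, y. Qed.

Section ResiduatedImplication.

Variables (L1 L3 : CLattice) (T2 : Type) (le2 : T2 -> T2 -> Prop) (bot2 : T2).
Hypothesis bot2_le : forall y, le2 bot2 y.
Variables (conj : L1 -> T2 -> L3) (sw : L3 -> T2 -> L1) (nw : L3 -> L1 -> T2).
Hypothesis adj : adjoint_triple (@cl_le L1) le2 (@cl_le L3) conj sw nw.
Hypothesis nzd : no_zero_divisors (cl_bot L1) bot2 (cl_bot L3) conj.

Lemma sw_top y : sw (cl_top L3) y = cl_top L1.
Proof. by apply: cl_top_eq; apply/(proj1 (adj _ _ _)); apply: cl_le_top. Qed.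

Lemma sw_bot_bot : sw (cl_bot L3) bot2 = cl_top L1.
Proof.
apply: cl_top_eq; apply/(proj1 (adj _ _ _)); apply/(proj2 (adj _ _ _)).
exact: bot2_le.
Qed.

Lemma sw_bot y : y <> bot2 -> sw (cl_bot L3) y = cl_bot L1.
Proof.
move=> y_neq0; apply: NNPP => sw_neq0; apply: nzd.
exists (sw (cl_bot L3) y), y; split=> //; split=> //.
by apply: cl_le_bot_eq; apply/(proj1 (adj _ _ _)); apply: cl_refl.
Qed.

End ResiduatedImplication.

Section CrispConcepts.

Variables (S : Setting) (K : Context S).

Notation botP := (bp_bot (P S)).

Let o_sw_top k r := sw_top (@o_adj S k) r.
Let o_sw_bot_bot k := sw_bot_bot (@bp_bot_le (P S)) (@o_adj S k).
Let o_sw_bot k r := sw_bot (@o_adj S k) (@o_nzd S k) (y := r).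
Let p_nw_top j r := sw_top (adjoint_triple_swap (@p_adj S j)) r.
Let p_nw_bot_bot j := sw_bot_bot (@bp_bot_le (P S)) (adjoint_triple_swap (@p_adj S j)).
Let p_nw_bot j r :=
  sw_bot (adjoint_triple_swap (@p_adj S j)) (no_zero_divisors_swap (@p_nzd S j)) (y := r).

Lemma up_N_chiB_top (X : pred (cB K)) a :
  (forall b, X b \/ cR a b = botP) -> up_N (chiB X) a = cl_top _.
Proof.
move=> X_or_R0; apply: cl_inf_top => _ [b ->]; rewrite /chiB.
case: (X_or_R0 b) => [-> | ->]; first exact: o_sw_top.
by case: (X b); [apply: o_sw_top | apply: o_sw_bot_bot].
Qed.

Lemma up_N_chiB_bot (X : pred (cB K)) a b :
  ~~ X b -> cR a b <> botP -> up_N (chiB X) a = cl_bot _.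
Proof. by move=> nXb R_neq0; apply: cl_inf_bot; exists b; rewrite /chiB (negbTE nXb) o_sw_bot. Qed.

Lemma down_N_chiA_top (Y : pred (cA K)) b :
  (forall a, Y a \/ cR a b = botP) -> down_N (chiA Y) b = cl_top _.
Proof.
move=> Y_or_R0; apply: cl_inf_top => _ [a ->]; rewrite /chiA.
case: (Y_or_R0 a) => [-> | ->]; first exact: p_nw_top.
by case: (Y a); [apply: p_nw_top | apply: p_nw_bot_bot].
Qed.

Lemma down_N_chiA_bot (Y : pred (cA K)) a b :
  ~~ Y a -> cR a b <> botP -> down_N (chiA Y) b = cl_bot _.
Proof. by move=> nYa R_neq0; apply: cl_inf_bot; exists a; rewrite /chiA (negbTE nYa) p_nw_bot. Qed.

Definition R_closed (X : pred (cB K)) (Y : pred (cA K)) : Prop :=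
  forall a b, cR a b <> botP -> X b = Y a.

Lemma R_closedC X Y : R_closed X Y -> R_closed (fun b => ~~ X b) (fun a => ~~ Y a).
Proof. by move=> clXY a b /clXY ->. Qed.

Lemma in_FN_R_closed X Y :
  cl_top (L1 S) <> cl_bot _ -> cl_top (L2 S) <> cl_bot _ ->
  in_FN (chiB X) (chiA Y) -> R_closed X Y.
Proof.
move=> L1_nontriv L2_nontriv [upXY downYX] a b R_neq0.
case Xb: (X b); case Ya: (Y a) => //.
- by have := down_N_chiA_bot (negbT Ya) R_neq0; rewrite downYX /chiB Xb.
- by have := up_N_chiB_bot (negbT Xb) R_neq0; rewrite upXY /chiA Ya.
Qed.

Lemma R_closed_in_FN X Y :
  normalized K -> R_closed X Y -> in_FN (chiB X) (chiA Y).
Proof.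
move=> [normA normB] clXY; split; apply: functional_extensionality.
- move=> a; rewrite /chiA; case Ya: (Y a).
    apply: up_N_chiB_top => b.
    by case: (classic (cR a b = botP)) => [|/clXY ->]; [right | left].
  have [[b R_neq0] _] := normA a.
  by apply: (up_N_chiB_bot _ R_neq0); rewrite (clXY _ _ R_neq0) Ya.
- move=> b; rewrite /chiB; case Xb: (X b).
    apply: down_N_chiA_top => a.
    by case: (classic (cR a b = botP)) => [|/clXY <-]; [right | left].
  have [[a R_neq0] _] := normB b.
  by apply: (down_N_chiA_bot _ R_neq0); rewrite -(clXY _ _ R_neq0) Xb.
Qed.

Lemma trivial_L1_iff_L2 (j : 'I_(mm S)) (k : 'I_(ss S)) (r : P S) :
  r <> botP -> cl_top (L1 S) = cl_bot _ <-> cl_top (L2 S) = cl_bot _.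
Proof.
move=> r_neq0; split=> triv; apply: NNPP => nontriv.
- by apply: (@p_nzd S j); exists r, (cl_top _); do 2!split=> //; apply: cl_trivial.
- by apply: (@o_nzd S k); exists (cl_top _), r; do 2!split=> //; apply: cl_trivial.
Qed.

Lemma in_FN_trivial g f :
  cl_top (L1 S) = cl_bot _ -> cl_top (L2 S) = cl_bot _ -> @in_FN S K g f.
Proof. by move=> triv1 triv2; split; apply: functional_extensionality => x; apply: cl_trivial. Qed.

End CrispConcepts.

Lemma nonempty_properC (T : Type) (X : pred T) :
  nonempty_proper X -> nonempty_proper (fun t => ~~ X t).
Proof. by move=> [[x Xx] [y nXy]]; split; [exists y | exists x; rewrite negbK]. Qed.

Theorem mainTheorem7 (S : Setting) (K : Context S)
  (X : pred (cB K)) (Y : pred (cA K)) :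
  normalized K ->
  in_FC X Y ->
  in_FC (fun b => ~~ X b) (fun a => ~~ Y a).
Proof.
move=> normK [FN_XY [propX propY]].
split; last by split; apply: nonempty_properC.
have [a0] := cA_ne K; have [[b0 R_neq0] _] := normK.1 a0.
have triv12 := trivial_L1_iff_L2 (csigma_p a0 b0) (csigma_o a0 b0) R_neq0.
case: (classic (cl_top (L1 S) = cl_bot _)) => [triv1 | nontriv1].
  by apply: in_FN_trivial triv1 (triv12.1 triv1).
apply: R_closed_in_FN normK _; apply: R_closedC.
by apply: in_FN_R_closed FN_XY => // /triv12.2.
Qed.
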